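(* Fix any $\gamma\in[0,1]$ and any $x\in X$. For any distribution $P$ over $\Pi$ and any $\pi\in\Pi$, if $m=\lceil 6/(\gamma^2\mu_t)\rceil$, then \[\mathbb{E}_{\widetilde P\sim P^m}\Bigl|\frac1{(1-K\mu_t)W_{\widetilde P}(x,\pi(x))+\mu_t}-\frac1{(1-K\mu_t)W_P(x,\pi(x))+\mu_t}\Bigr|\le\frac{\gamma}{(1-K\mu_t)W_P(x,\pi(x))+\mu_t}.\] This implies that for all distributions $P$ over $\Pi$ and any $\pi\in\Pi$ there exists $\widetilde P\in\mathcal S_m$ such that for any $\lambda>0$, \[(V_{P,\pi,t}-V_{\widetilde P,\pi,t})+(1+\lambda)(\widehat V_{\widetilde P,\pi,t}-\widehat V_{P,\pi,t})\le\gamma\bigl(V_{P,\pi,t}+(1+\lambda)\widehat V_{P,\pi,t}\bigr).\]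
   Context: $A$ is a set of $K$ actions, $X$ a set of contexts, $\Pi$ a finite set of $N$ policies $\pi:X\to A$, $D_X$ a distribution on $X$, $\delta\in(0,1)$, and $x_1,\dots,x_{t-1}\in X$ a fixed sample. $C_t=2\log(Nt/\delta)$, $\mu_t=\min\{\frac1{2K},\sqrt{C_t/(2Kt)}\}$. For a distribution $P$ over $\Pi$, $W_P(x,a)=\sum_{\pi:\pi(x)=a}P(\pi)$; $V_{P,\pi,t}=\mathbb{E}_{x\sim D_X}[1/((1-K\mu_t)W_P(x,\pi(x))+\mu_t)]$ and $\widehat V_{P,\pi,t}=\frac1{t-1}\sum_{i=1}^{t-1}1/((1-K\mu_t)W_P(x_i,\pi(x_i))+\mu_t)$. $\mathcal S_m$ is the set of distributions of the form $\frac1m\sum_{i=1}^m\mathbb{I}(\pi=\pi_i)$ with $\pi_i\in\Pi$; $\widetilde P\sim P^m$ means $\widetilde P=\frac1m\sum_{i=1}^m\mathbb{I}(\cdot=\pi_i)$ with $\pi_1,\dots,\pi_m$ drawn i.i.d. from $P$. *)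

From HB Require Import structures.
From mathcomp Require Import all_boot all_order all_algebra.
From mathcomp Require Import all_classical all_reals all_analysis.
Set Implicit Arguments. Unset Strict Implicit. Unset Printing Implicit Defensive.
Import Order.TTheory GRing.Theory Num.Theory.
Import numFieldNormedType.Exports.
Local Open Scope ring_scope.

Section Defs.
Variable R : realType.

Definition Ct (N t : nat) (delta : R) : R := 2 * ln (N%:R * t%:R / delta).

Definition mut (K N t : nat) (delta : R) : R :=
  Num.min (2 * K%:R)^-1 (Num.sqrt (Ct N t delta / (2 * K%:R * t%:R))).

Variables (X : Type) (A Pi : finType) (ev : Pi -> X -> A).

Definition is_distr (P : {ffun Pi -> R}) : Prop :=
  (forall p, 0 <= P p) /\ \sum_p P p = 1.

Definition WP (P : {ffun Pi -> R}) (x : X) (a : A) : R :=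
  \sum_(p | ev p x == a) P p.

Definition wt (K : nat) (mu w : R) : R := ((1 - K%:R * mu) * w + mu)^-1.

Definition emp (m : nat) (s : {ffun 'I_m -> Pi}) : {ffun Pi -> R} :=
  [ffun p => (m%:R)^-1 * #|[set i | s i == p]|%:R].

Definition in_Sm (m : nat) (Q : {ffun Pi -> R}) : Prop :=
  exists s : {ffun 'I_m -> Pi}, Q = emp s.

(* E_{tilde P ~ P^m} F(tilde P) : pi_1..pi_m drawn i.i.d. from P *)
Definition Esample (P : {ffun Pi -> R}) (m : nat) (F : {ffun Pi -> R} -> R) : R :=
  \sum_(s : {ffun 'I_m -> Pi}) (\prod_(i < m) P (s i)) * F (emp s).

Definition Vhat (K N t : nat) (delta : R) (xs : 'I_t.-1 -> X)
    (P : {ffun Pi -> R}) (q : Pi) : R :=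
  (t.-1%:R)^-1 * \sum_(i < t.-1)
     wt K (mut K N t delta) (WP P (xs i) (ev q (xs i))).

End Defs.

Definition Vpop (R : realType) (d : measure_display) (X : measurableType d)
    (D : probability X R) (A Pi : finType) (ev : Pi -> X -> A)
    (K N t : nat) (delta : R) (P : {ffun Pi -> R}) (q : Pi) : R :=
  Rintegral D setT (fun x => wt K (mut K N t delta) (WP ev P x (ev q x))).

From HB Require Import structures.
From mathcomp Require Import all_boot all_order all_algebra.
From mathcomp Require Import all_classical all_reals all_analysis.
From mathcomp Require Import ring lra.
Import Order.TTheory GRing.Theory Num.Theory.
Import numFieldNormedType.Exports.
Local Open Scope ring_scope.
Set Implicit Arguments. Unset Strict Implicit. Unset Printing Implicit Defensive.

(* Fix a context [x] and let [w = W_P(x, pi(x))], [c = 1 - K mu] and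
   [s = c w + mu].  For a sample of [m] policies, [W_P~(x, pi(x))] is the mean
   of [m] i.i.d. Bernoulli([w]) variables, so its mean-square deviation from
   [w] is [w (1 - w) / m].  The map [v |-> 1 / (c v + mu)] deviates from [1 / s]
   by at most [(1 / s) (th + c^2 (v - w)^2 (1 / (4 th s^2) + 1 / (s mu)))], and
   taking expectations with [m >= 6 / (gamma^2 mu)] bounds the expected
   deviation by [gamma / 2 * (1 / s)].
   The integrand of [V] and the summand of [V^] depend on [x] only through the
   finite set of policies agreeing with [pi] at [x]; hence both are finite
   nonnegative mixtures of such terms, and their expected normalized deviations
   are each at most [gamma / 2].  Some sample does no worse than this average,
   and its empirical distribution is the required element of [S_m]. *)

(* [1 / r = 1 / s + (s - r) / (s r)]: AM-GM on the first-order part of the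
   deviation, [mu <= r] on the second-order part. *)
Lemma inv_dist_le (R : realFieldType) (mu r s th : R) :
  0 < mu -> mu <= r -> 0 < s -> 0 < th ->
  `|r^-1 - s^-1| <= s^-1 * (th + (r - s) ^+ 2 * ((4 * th * s ^+ 2)^-1 + (s * mu)^-1)).
Proof.
move=> mu0 mur s0 th0; have r0 : 0 < r by apply: lt_le_trans mur.
rewrite -(ler_pM2l s0) mulrA mulfV ?gt_eqF // mul1r.
set d := r - s.
have -> : s * `|r^-1 - s^-1| = `|d| / s + (- d * `|d|) / (s * r).
  rewrite -{1}(gtr0_norm s0) -normrM.
  have -> : s * (r^-1 - s^-1) = - d / r by rewrite /d; field; rewrite !gt_eqF.
  rewrite normrM normrN normfV (gtr0_norm r0).
  by rewrite /d; field; rewrite !gt_eqF.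
have amgm : `|d| / s <= th + d ^+ 2 / (4 * th * s ^+ 2).
  rewrite -subr_ge0 -(real_normK (num_real d)).
  have -> : th + `|d| ^+ 2 / (4 * th * s ^+ 2) - `|d| / s =
            (`|d| / s - 2 * th) ^+ 2 / (4 * th).
    by field; rewrite !gt_eqF.
  by rewrite divr_ge0 ?sqr_ge0 // ltW // mulr_gt0.
have tail : (- d * `|d|) / (s * r) <= d ^+ 2 / (s * mu).
  apply: (@le_trans _ _ (d ^+ 2 / (s * r))).
    apply: ler_wpM2r; first by rewrite invr_ge0 mulr_ge0 ?ltW.
    rewrite -(real_normK (num_real d)) expr2.
    by apply: ler_wpM2r; rewrite ?normr_ge0 // -normrN ler_norm.
  apply: ler_wpM2l; first exact: sqr_ge0.
  by rewrite lef_pV2 ?posrE ?mulr_gt0 // ler_pM2l.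
rewrite mulrDr addrA; exact: lerD.
Qed.

(* Choosing [th = g / 8] in [inv_dist_le], the three contributions to the
   expected deviation are at most [g / 8], [g / 12] and [g / 6]. *)
Lemma sample_dev_bound (R : realFieldType) (c mu w g m : R) :
  0 <= c <= 1 -> 0 < mu -> 0 <= w <= 1 -> 0 < g <= 1 -> 6 <= g ^+ 2 * mu * m ->
  g / 8 + c ^+ 2 * (w * (1 - w) / m) *
    ((4 * (g / 8) * (c * w + mu) ^+ 2)^-1 + ((c * w + mu) * mu)^-1) <= g / 2.
Proof.
move=> /andP[c_ge0 c_le1] mu_gt0 /andP[w_ge0 w_le1] /andP[g_gt0 g_le1] m_large.
set s := c * w + mu; set V := w * (1 - w) / m.
have m_gt0 : 0 < m.
  have : 0 < g ^+ 2 * mu * m by lra.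
  by rewrite pmulr_rgt0 // mulr_gt0 // exprn_gt0.
have cw_ge0 : 0 <= c * w by rewrite mulr_ge0.
have s_gt0 : 0 < s by rewrite /s; lra.
have s2_ge : 4 * (c * w) * mu <= s ^+ 2.
  by rewrite /s -subr_ge0 (_ : _ - _ = (c * w - mu) ^+ 2) ?sqr_ge0 //; ring.
have V_le : 6 * V <= w * (1 - w) * g ^+ 2 * mu.
  have -> : w * (1 - w) * g ^+ 2 * mu = (g ^+ 2 * mu * m) * V.
    by rewrite /V; field; rewrite gt_eqF.
  by apply: ler_wpM2r => //; apply: divr_ge0; [apply: mulr_ge0 |]; lra.
have cV_le : c ^+ 2 * (6 * V) <= g ^+ 2 * (c * w * mu).
  apply: (@le_trans _ _ (c ^+ 2 * (w * (1 - w) * g ^+ 2 * mu))).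
    by apply: ler_wpM2l; rewrite ?sqr_ge0.
  have -> : c ^+ 2 * (w * (1 - w) * g ^+ 2 * mu) =
            g ^+ 2 * (c * w * mu) * (c * (1 - w)) by ring.
  apply: ler_piMr; first by apply: mulr_ge0; [exact: sqr_ge0 | nra].
  nra.
have termA : c ^+ 2 * V / (4 * (g / 8) * s ^+ 2) <= g / 12.
  have den_gt0 : 0 < 4 * (g / 8) * s ^+ 2.
    by apply: mulr_gt0; [lra | exact: exprn_gt0].
  have : g ^+ 2 * (4 * (c * w) * mu) <= g ^+ 2 * s ^+ 2.
    by apply: ler_wpM2l; rewrite ?sqr_ge0.
  by rewrite ler_pdivrMr //; lra.
have termB : c ^+ 2 * V / (s * mu) <= g / 6.
  rewrite ler_pdivrMr ?mulr_gt0 //.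
  have gcw_le : g * (c * w) * mu <= s * mu.
    by apply: ler_wpM2r; [exact: ltW | rewrite /s; nra].
  have : g ^+ 2 * (c * w * mu) <= g * (s * mu).
    by rewrite expr2 -mulrA; apply: ler_wpM2l; [exact: ltW | rewrite mulrA].
  nra.
rewrite mulrDr; lra.
Qed.

Section ProductExpectation.
Variables (R : realFieldType) (Pi : finType) (P : {ffun Pi -> R}).
Hypotheses (P_ge0 : forall p, 0 <= P p) (P_sum1 : \sum_p P p = 1).
Variable m : nat.

Definition Eprod (F : {ffun 'I_m -> Pi} -> R) : R :=
  \sum_(s : {ffun 'I_m -> Pi}) (\prod_(i < m) P (s i)) * F s.

Lemma Eprod_prod (phi : 'I_m -> Pi -> R) :
  Eprod (fun s => \prod_i phi i (s i)) = \prod_i \sum_p P p * phi i p.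
Proof. by rewrite bigA_distr_bigA; apply: eq_bigr => s _; rewrite big_split. Qed.

Lemma eq_Eprod F G : F =1 G -> Eprod F = Eprod G.
Proof. by move=> FG; apply: eq_bigr => s _; rewrite FG. Qed.

Lemma EprodZ c F : Eprod (fun s => c * F s) = c * Eprod F.
Proof. by rewrite /Eprod mulr_sumr; apply: eq_bigr => s _; rewrite mulrCA. Qed.

Lemma EprodD F G : Eprod (fun s => F s + G s) = Eprod F + Eprod G.
Proof. by rewrite /Eprod -big_split; apply: eq_bigr => s _; rewrite mulrDr. Qed.

Lemma Eprod_sum (J : finType) (F : J -> {ffun 'I_m -> Pi} -> R) :
  Eprod (fun s => \sum_j F j s) = \sum_j Eprod (F j).
Proof.
rewrite /Eprod /=; under eq_bigr do rewrite mulr_sumr; exact: exchange_big.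
Qed.

Lemma Eprod_cst c : Eprod (fun _ => c) = c.
Proof.
rewrite /Eprod -mulr_suml -[RHS]mul1r; congr (_ * _).
rewrite -(bigA_distr_bigA (fun (_ : 'I_m) (p : Pi) => P p)) /=.
by rewrite big1.
Qed.

Lemma ler_Eprod F G : (forall s, F s <= G s) -> Eprod F <= Eprod G.
Proof.
move=> FG; apply: ler_sum => s _; apply: ler_wpM2l => //.
by apply: prodr_ge0 => i _.
Qed.

Lemma Eprod_coord (i : 'I_m) (g : Pi -> R) :
  Eprod (fun s => g (s i)) = \sum_p P p * g p.
Proof.
have := Eprod_prod (fun k p => if k == i then g p else 1).
rewrite (bigD1 i) //= eqxx [X in _ * X]big1 => [|k /negbTE ->]; last first.
  by under eq_bigr do rewrite mulr1.
rewrite mulr1 => <-; apply: eq_bigr => s _.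
by rewrite -big_mkcond big_pred1_eq.
Qed.

Lemma Eprod_coord2 (i j : 'I_m) (g h : Pi -> R) : i != j ->
  Eprod (fun s => g (s i) * h (s j)) = (\sum_p P p * g p) * (\sum_p P p * h p).
Proof.
move=> ij.
have := Eprod_prod (fun k p => (if k == i then g p else 1) * (if k == j then h p else 1)).
rewrite (bigD1 i) // (bigD1 j) 1?eq_sym //= eqxx eq_sym (negbTE ij) eqxx.
rewrite [X in _ * (_ * X)]big1 => [|k /andP[/negbTE -> /negbTE ->]]; last first.
  by under eq_bigr do rewrite !mulr1.
under [X in _ = X * _]eq_bigr do rewrite mulr1.
under [X in _ = _ * (X * _)]eq_bigr do rewrite mul1r.
rewrite mulr1 => <-; apply: eq_bigr => s _.
by rewrite big_split /= -!big_mkcond /= !big_pred1_eq.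
Qed.

Lemma Eprod_coord_mul (f : Pi -> R) (i j : 'I_m) :
  Eprod (fun s => f (s i) * f (s j)) =
  if i == j then \sum_p P p * f p ^+ 2 else (\sum_p P p * f p) ^+ 2.
Proof.
case: (eqVneq i j) => [<- | ij]; last by rewrite Eprod_coord2 // expr2.
by rewrite -(Eprod_coord i (fun p => f p ^+ 2)).
Qed.

Lemma Eprod_mean_var (f : Pi -> R) : (0 < m)%N ->
  Eprod (fun s => (m%:R^-1 * \sum_i f (s i) - \sum_p P p * f p) ^+ 2) =
  (\sum_p P p * f p ^+ 2 - (\sum_p P p * f p) ^+ 2) / m%:R.
Proof.
move=> m_gt0; have mR : m%:R != 0 :> R by rewrite pnatr_eq0 -lt0n.
set mu := \sum_p P p * f p; pose g p := f p - mu.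
have Eg : \sum_p P p * g p = 0.
  under eq_bigr do rewrite mulrBr.
  by rewrite sumrB -mulr_suml P_sum1 mul1r subrr.
have Eg2 : \sum_p P p * g p ^+ 2 = \sum_p P p * f p ^+ 2 - mu ^+ 2.
  have e p : P p * g p ^+ 2 = P p * f p ^+ 2 - (2 * mu * (P p * f p) - mu ^+ 2 * P p).
    by rewrite /g; ring.
  under eq_bigr do rewrite e.
  by rewrite sumrB sumrB -!mulr_sumr P_sum1 -/mu; ring.
have -> : Eprod (fun s => (m%:R^-1 * \sum_i f (s i) - mu) ^+ 2) =
    Eprod (fun s => m%:R^-2 * \sum_i \sum_j g (s i) * g (s j)).
  apply: eq_bigr => s _; congr (_ * _).
  rewrite -big_distrlr /= -expr2 /g sumrB sumr_const card_ord.
  by rewrite -mulr_natr; field.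
have diag (i : 'I_m) : \sum_j (if i == j then \sum_p P p * g p ^+ 2 else 0) =
    \sum_p P p * g p ^+ 2.
  by rewrite -big_mkcond (big_pred1 i) // => j; rewrite eq_sym.
rewrite EprodZ Eprod_sum; under eq_bigr do rewrite Eprod_sum.
under eq_bigr do under eq_bigr do rewrite Eprod_coord_mul Eg expr0n /=.
under eq_bigr do rewrite diag.
by rewrite sumr_const card_ord Eg2 -mulr_natr; field.
Qed.

Lemma exists_le_Eprod F : exists s, F s <= Eprod F.
Proof.
case: (pickP (@predT Pi)) => [p0 _ | Pi0]; last first.
  by move: P_sum1; rewrite big_pred0 // => /eqP; rewrite eq_sym oner_eq0.
have [s _ s_min] := @arg_minP _ R _ [ffun=> p0] predT F isT.
by exists s; rewrite -[F s]Eprod_cst; apply: ler_Eprod => s'; exact: s_min.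
Qed.

End ProductExpectation.

Lemma emp_sum_in (R : realType) (Pi : finType) (m : nat) (s : {ffun 'I_m -> Pi})
    (C : {set Pi}) :
  \sum_(p in C) emp R s p = m%:R^-1 * \sum_i (s i \in C)%:R.
Proof.
under eq_bigr do rewrite ffunE.
rewrite -mulr_sumr; congr (_ * _).
have card p : #|[set i | s i == p]|%:R = \sum_i (s i == p)%:R :> R.
  by rewrite -sum1_card natr_sum big_mkcond; apply: eq_bigr => i _; rewrite inE; case: eqP.
under eq_bigr do rewrite card.
rewrite exchange_big; apply: eq_bigr => i _.
case: (boolP (s i \in C)) => siC.
  rewrite (bigD1 (s i)) //= eqxx big1 ?addr0 // => p /andP[_].
  by rewrite eq_sym => /negbTE ->.
by apply: big1 => p pC; case: eqP => // e; rewrite e pC in siC.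
Qed.

Section SampledWeight.
Variables (R : realType) (Pi : finType) (P : {ffun Pi -> R}).
Hypotheses (P_ge0 : forall p, 0 <= P p) (P_sum1 : \sum_p P p = 1).
Variables (K : nat) (mu g : R) (m : nat).
Hypotheses (Kmu_le1 : K%:R * mu <= 1) (mu_gt0 : 0 < mu) (g_gt0 : 0 < g) (g_le1 : g <= 1)
  (m_large : 6 <= g ^+ 2 * mu * m%:R).

Lemma wt_gt0 w : 0 <= w -> 0 < wt K mu w.
Proof. by move=> w0; rewrite invr_gt0 ltr_wpDl // mulr_ge0 // subr_ge0. Qed.

Lemma Eprod_wt_dev (C : {set Pi}) :
  Eprod P (fun s : {ffun 'I_m -> Pi} =>
    `|wt K mu (\sum_(p in C) emp R s p) - wt K mu (\sum_(p in C) P p)|)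
  <= g / 2 * wt K mu (\sum_(p in C) P p).
Proof.
set w := \sum_(p in C) P p; set c := 1 - K%:R * mu.
have c01 : 0 <= c <= 1.
  by rewrite /c subr_ge0 Kmu_le1 gerBl mulr_ge0 // ltW.
have w01 : 0 <= w <= 1.
  rewrite sumr_ge0 //= -P_sum1 [X in _ <= X](bigID (mem C)) /= lerDl.
  exact: sumr_ge0.
have m_gt0 : (0 < m)%N.
  rewrite lt0n; apply: contraTneq m_large => ->; rewrite mulr0; lra.
have s_gt0 : 0 < c * w + mu.
  by apply: ltr_wpDl => //; apply: mulr_ge0; case/andP: c01; case/andP: w01.
pose f p : R := (p \in C)%:R.
have Ef : \sum_p P p * f p = w.
  rewrite /w [RHS]big_mkcond; apply: eq_bigr => p _.
  by rewrite /f; case: (p \in C); rewrite ?mulr1 ?mulr0.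
have Ef2 : \sum_p P p * f p ^+ 2 = w.
  rewrite -Ef; apply: eq_bigr => p _.
  by rewrite /f; case: (p \in C); rewrite ?expr1n ?expr0n.
pose M := (4 * (g / 8) * (c * w + mu) ^+ 2)^-1 + ((c * w + mu) * mu)^-1.
have pointwise (s : {ffun 'I_m -> Pi}) :
    `|wt K mu (\sum_(p in C) emp R s p) - wt K mu w| <=
    (c * w + mu)^-1 * (g / 8 + (c * (m%:R^-1 * \sum_i f (s i) - w)) ^+ 2 * M).
  rewrite /wt -/c emp_sum_in.
  set v := m%:R^-1 * _.
  have v_ge0 : 0 <= v by rewrite mulr_ge0 ?invr_ge0 ?sumr_ge0.
  have -> : c * (v - w) = (c * v + mu) - (c * w + mu) by ring.
  apply: inv_dist_le => //; last exact: divr_gt0.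
  by rewrite lerDr mulr_ge0 //; case/andP: c01.
apply: le_trans (ler_Eprod P_ge0 pointwise) _.
rewrite EprodZ EprodD (Eprod_cst P_sum1).
under eq_Eprod do rewrite exprMn mulrAC.
rewrite EprodZ -Ef (Eprod_mean_var P_sum1) // Ef Ef2 [X in _ <= X]mulrC.
apply: ler_wpM2l; first by rewrite invr_ge0 ltW.
rewrite (_ : w - w ^+ 2 = w * (1 - w)); last by ring.
by rewrite mulrAC; apply: sample_dev_bound => //; apply/andP.
Qed.

Definition Vweighted (J : finType) (a : J -> R) (E : J -> {set Pi}) (Q : {ffun Pi -> R}) :=
  \sum_j a j * wt K mu (\sum_(p in E j) Q p).

Definition wt_dev (J : finType) (a : J -> R) (E : J -> {set Pi}) (Q : {ffun Pi -> R}) :=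
  \sum_j a j * `|wt K mu (\sum_(p in E j) Q p) - wt K mu (\sum_(p in E j) P p)|.

Section Family.
Variables (J : finType) (a : J -> R) (E : J -> {set Pi}).
Hypothesis a_ge0 : forall j, 0 <= a j.

Lemma Vweighted_ge0 : 0 <= Vweighted a E P.
Proof. by apply: sumr_ge0 => j _; rewrite mulr_ge0 // ltW // wt_gt0 ?sumr_ge0. Qed.

Lemma normalized_wt_dev_ge0 Q : 0 <= (Vweighted a E P)^-1 * wt_dev a E Q.
Proof.
rewrite mulr_ge0 ?invr_ge0 ?Vweighted_ge0 //.
by apply: sumr_ge0 => j _; rewrite mulr_ge0.
Qed.

Lemma Vweighted_dist_le Q : `|Vweighted a E Q - Vweighted a E P| <= wt_dev a E Q.
Proof.
rewrite -sumrB; apply: le_trans (ler_norm_sum _ _ _) _; apply: ler_sum => j _.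
by rewrite -mulrBr normrM ger0_norm.
Qed.

Lemma Vweighted_eq0 Q : Vweighted a E P = 0 -> Vweighted a E Q = 0.
Proof.
have wtP_gt0 j : 0 < wt K mu (\sum_(p in E j) P p) by rewrite wt_gt0 ?sumr_ge0.
move=> /psumr_eq0P a0; apply: big1 => j _.
have /eqP := a0 (fun i _ => mulr_ge0 (a_ge0 i) (ltW (wtP_gt0 i))) j isT.
by rewrite mulf_eq0 (gt_eqF (wtP_gt0 j)) orbF => /eqP ->; rewrite mul0r.
Qed.

Lemma Eprod_wt_dev_sum :
  Eprod P (fun s : {ffun 'I_m -> Pi} => wt_dev a E (emp R s)) <= g / 2 * Vweighted a E P.
Proof.
rewrite Eprod_sum /Vweighted mulr_sumr; apply: ler_sum => j _.
by rewrite EprodZ mulrCA; apply: ler_wpM2l => //; exact: Eprod_wt_dev.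
Qed.

Lemma Eprod_normalized_wt_dev :
  Eprod P (fun s : {ffun 'I_m -> Pi} => (Vweighted a E P)^-1 * wt_dev a E (emp R s))
    <= g / 2.
Proof.
rewrite EprodZ; have [->|V_neq0] := eqVneq (Vweighted a E P) 0.
  by rewrite invr0 mul0r divr_ge0 // ltW.
have V_gt0 : 0 < Vweighted a E P by rewrite lt_def V_neq0 Vweighted_ge0.
by rewrite mulrC ler_pdivrMr // Eprod_wt_dev_sum.
Qed.

Lemma Vweighted_close_of_normalized (s : {ffun 'I_m -> Pi}) :
  (Vweighted a E P)^-1 * wt_dev a E (emp R s) <= g ->
  `|Vweighted a E (emp R s) - Vweighted a E P| <= g * Vweighted a E P.
Proof.
(* The hypothesis is vacuous here ([0^-1 = 0]), but every weight [a j] vanishes. *)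
have [V0 _|V_neq0] := eqVneq (Vweighted a E P) 0.
  by rewrite V0 (Vweighted_eq0 (emp R s) V0) subrr normr0 mulr0.
have V_gt0 : 0 < Vweighted a E P by rewrite lt_def V_neq0 Vweighted_ge0.
rewrite mulrC ler_pdivrMr // => dev_le.
exact: le_trans (Vweighted_dist_le _) dev_le.
Qed.

End Family.

(* The sum of the two normalized deviations has mean at most [g]; pick a sample
   below the mean. *)
Lemma exists_sample_Vweighted (J1 J2 : finType)
    (a1 : J1 -> R) (E1 : J1 -> {set Pi}) (a2 : J2 -> R) (E2 : J2 -> {set Pi}) :
  (forall j, 0 <= a1 j) -> (forall j, 0 <= a2 j) ->
  exists s : {ffun 'I_m -> Pi},
    `|Vweighted a1 E1 (emp R s) - Vweighted a1 E1 P| <= g * Vweighted a1 E1 P /\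
    `|Vweighted a2 E2 (emp R s) - Vweighted a2 E2 P| <= g * Vweighted a2 E2 P.
Proof.
move=> a1_ge0 a2_ge0.
have [s Zs] := exists_le_Eprod P_ge0 P_sum1 (fun s : {ffun 'I_m -> Pi} =>
  (Vweighted a1 E1 P)^-1 * wt_dev a1 E1 (emp R s) +
  (Vweighted a2 E2 P)^-1 * wt_dev a2 E2 (emp R s)).
rewrite EprodD in Zs.
have := Eprod_normalized_wt_dev E1 a1_ge0; have := Eprod_normalized_wt_dev E2 a2_ge0.
have := normalized_wt_dev_ge0 E1 a1_ge0 (emp R s).
have := normalized_wt_dev_ge0 E2 a2_ge0 (emp R s).
exists s; split; apply: Vweighted_close_of_normalized => //; lra.
Qed.

End SampledWeight.

Definition agree (X : Type) (A Pi : finType) (ev : Pi -> X -> A) (q : Pi) (x : X) :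
    {set Pi} :=
  [set p | ev p x == ev q x].

Section FiniteRange.
Local Open Scope classical_set_scope.
Variables (R : realType) (d : measure_display) (X : measurableType d).

Lemma Rintegral_finite_range (D : {finite_measure set X -> \bar R}) (T : finType)
    (S : X -> T) (h : T -> R) :
  (forall t, measurable (S @^-1` [set t])) ->
  Rintegral D setT (fun x => h (S x)) = \sum_t h t * fine (D (S @^-1` [set t])).
Proof.
move=> S_meas.
have h_sum x : h (S x) = \sum_t h t * \1_(S @^-1` [set t]) x.
  rewrite (bigD1 (S x)) //= big1 ?addr0 => [|t /negbTE St].
    by rewrite indicE mem_set ?mulr1.
  by rewrite indicE memNset ?mulr0 //= => Sxt; rewrite Sxt eqxx in St.
rewrite /Rintegral; under eq_integral do rewrite h_sum -sumEFin.
rewrite integral_sum //; last first.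
  by move=> t; under eq_fun do rewrite EFinM; exact/integrableZl/integrable_indic.
rewrite (eq_bigr (fun t => (h t * fine (D (S @^-1` [set t])))%:E)) ?sumEFin // => t _.
under eq_integral do rewrite EFinM.
rewrite integralZl //; last exact: integrable_indic.
by rewrite integral_indic // setIT EFinM fineK // fin_num_measure.
Qed.

Lemma agree_preimage_measurable (A Pi : finType) (ev : Pi -> X -> A) (q : Pi)
    (T : {set Pi}) :
  (forall p a, measurable [set x | ev p x = a]) ->
  measurable (agree ev q @^-1` [set T]).
Proof.
move=> ev_meas.
have agree_meas p : measurable [set x | ev p x = ev q x].
  have -> : [set x | ev p x = ev q x] =
      \bigcup_(a in [set: A]) ([set x | ev p x = a] `&` [set x | ev q x = a]).
    by apply/seteqP; split => [x /= e | x [a _ [/= -> ->]]] //; exists (ev q x).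
  by apply: fin_bigcup_measurable; [exact: finite_finset | move=> a _; exact: measurableI].
have -> : agree ev q @^-1` [set T] =
    \bigcap_(p in [set: Pi]) (if p \in T then [set x | ev p x = ev q x]
                              else ~` [set x | ev p x = ev q x]).
  apply/seteqP; split => x /= => [<- p _ | xT].
    by rewrite inE; case: eqP.
  apply/setP => p; rewrite inE; have := xT p I.
  by case: (p \in T) => /=; case: eqP.
apply: fin_bigcap_measurable; first exact: finite_finset.
by move=> p _; case: (p \in T) => //; exact: measurableC.
Qed.

End FiniteRange.

Lemma mut_gt0 (R : realType) (K N t : nat) (delta : R) :
  (0 < K)%N -> (0 < N)%N -> (0 < t)%N -> 0 < delta < 1 -> 0 < mut K N t delta.
Proof.
move=> K_gt0 N_gt0 t_gt0 /andP[delta_gt0 delta_lt1].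
have K_pos : 0 < K%:R :> R by rewrite ltr0n.
rewrite /mut lt_min invr_gt0 mulr_gt0 //= sqrtr_gt0 divr_gt0 ?mulr_gt0 ?ltr0n //.
rewrite ln_gt0 // ltr_pdivlMr // mul1r (lt_le_trans delta_lt1) //.
by rewrite -natrM ler1n muln_gt0 N_gt0.
Qed.

Lemma Kmut_le1 (R : realType) (K N t : nat) (delta : R) :
  (0 < K)%N -> K%:R * mut K N t delta <= 1.
Proof.
move=> K_gt0; have mut_le : mut K N t delta <= (2 * K%:R)^-1 by rewrite ge_min lexx.
apply: le_trans (ler_wpM2l (ler0n _ K) mut_le) _.
by rewrite invfM mulrCA mulfV ?mulr1 ?invf_le1 ?ler1n // pnatr_eq0 -lt0n.
Qed.

Lemma ceil_sample_size (R : realType) (g mu : R) : 0 < g -> 0 < mu ->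
  6 <= g ^+ 2 * mu * (absz (Num.ceil (6 / (g ^+ 2 * mu))))%:R.
Proof.
move=> g_gt0 mu_gt0; have gmu_gt0 : 0 < g ^+ 2 * mu by rewrite mulr_gt0 ?exprn_gt0.
have ceil_ge0 : 0 <= Num.ceil (6 / (g ^+ 2 * mu)).
  by rewrite ceil_ge0 (lt_trans _ (divr_gt0 _ gmu_gt0)) ?ltrN10.
rewrite natr_absz ger0_norm // -ler_pdivrMl // mulrC.
exact: ceil_ge.
Qed.

Lemma WP_agree (R : realType) (X : Type) (A Pi : finType) (ev : Pi -> X -> A)
    (Q : {ffun Pi -> R}) (q : Pi) (x : X) :
  WP ev Q x (ev q x) = \sum_(p in agree ev q x) Q p.
Proof. by apply: eq_bigl => p; rewrite inE. Qed.

Lemma Vpop_Vweighted (R : realType) (d : measure_display) (X : measurableType d)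
    (D : probability X R) (A Pi : finType) (ev : Pi -> X -> A)
    (K N t : nat) (delta : R) (Q : {ffun Pi -> R}) (q : Pi) :
  (forall p a, measurable [set x | ev p x = a]) ->
  Vpop D ev K N t delta Q q =
  Vweighted K (mut K N t delta) (fun T => fine (D (agree ev q @^-1` [set T])%classic)) id Q.
Proof.
move=> ev_meas; rewrite /Vpop.
under eq_fun do rewrite WP_agree.
rewrite (Rintegral_finite_range _
  (fun T : {set Pi} => wt K (mut K N t delta) (\sum_(p in T) Q p))).
  by apply: eq_bigr => T _; rewrite mulrC.
by move=> T; exact: agree_preimage_measurable.
Qed.

Lemma Vhat_Vweighted (R : realType) (X : Type) (A Pi : finType) (ev : Pi -> X -> A)
    (K N t : nat) (delta : R) (xs : 'I_t.-1 -> X) (Q : {ffun Pi -> R}) (q : Pi) :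
  Vhat ev K N delta xs Q q =
  Vweighted K (mut K N t delta) (fun=> t.-1%:R^-1) (fun i => agree ev q (xs i)) Q.
Proof. by rewrite /Vhat mulr_sumr; apply: eq_bigr => i _; rewrite WP_agree. Qed.
Lemma probability_inhabited (R : realType) (d : measure_display) (X : measurableType d)
    (D : probability X R) : inhabited X.
Proof.
apply: contrapT => X0; have := @probability_setT _ _ _ D.
rewrite (_ : setT = set0) ?measure0; last first.
  by apply/seteqP; split => x // _; apply: X0; exists.
by case=> /esym/eqP; rewrite oner_eq0.
Qed.

Lemma Esample_WP_dev (R : realType) (X : Type) (A Pi : finType) (ev : Pi -> X -> A)
    (K : nat) (mu g : R) (m : nat) (x : X) (P : {ffun Pi -> R}) (q : Pi) :
  is_distr P -> K%:R * mu <= 1 -> 0 < mu -> 0 < g -> g <= 1 ->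
  6 <= g ^+ 2 * mu * m%:R ->
  Esample P m (fun Q => `| wt K mu (WP ev Q x (ev q x)) - wt K mu (WP ev P x (ev q x)) |)
    <= g * wt K mu (WP ev P x (ev q x)).
Proof.
move=> [P_ge0 P_sum1] Kmu_le1 mu_gt0 g_gt0 g_le1 m_large.
rewrite /Esample; under eq_bigr do rewrite !WP_agree.
rewrite WP_agree.
apply: le_trans (Eprod_wt_dev P_ge0 P_sum1 Kmu_le1 mu_gt0 g_gt0 g_le1 m_large _) _.
apply: ler_wpM2r; first by rewrite ltW // wt_gt0 // sumr_ge0.
by rewrite ler_pdivrMr // ler_peMr ?ltW // ltr1n.
Qed.

Lemma exists_sample_Vpop_Vhat (R : realType) (d : measure_display) (X : measurableType d)
    (A Pi : finType) (ev : Pi -> X -> A) (D : probability X R) (K N t : nat) (delta : R)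
    (xs : 'I_t.-1 -> X) (g : R) (m : nat) (P : {ffun Pi -> R}) (q : Pi) :
  (forall p a, measurable [set x | ev p x = a]) -> is_distr P ->
  K%:R * mut K N t delta <= 1 -> 0 < mut K N t delta -> 0 < g -> g <= 1 ->
  6 <= g ^+ 2 * mut K N t delta * m%:R ->
  exists Q : {ffun Pi -> R}, in_Sm m Q /\
    forall lambda : R, 0 < lambda ->
      (Vpop D ev K N t delta P q - Vpop D ev K N t delta Q q)
      + (1 + lambda) * (Vhat ev K N delta xs Q q - Vhat ev K N delta xs P q)
      <= g * (Vpop D ev K N t delta P q + (1 + lambda) * Vhat ev K N delta xs P q).
Proof.
move=> ev_meas [P_ge0 P_sum1] Kmu_le1 mu_gt0 g_gt0 g_le1 m_large.
have a1_ge0 (T : {set Pi}) : 0 <= fine (D (agree ev q @^-1` [set T])%classic).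
  exact/fine_ge0/measure_ge0.
have a2_ge0 (i : 'I_t.-1) : 0 <= t.-1%:R^-1 :> R by rewrite invr_ge0.
have [s [close1 close2]] := exists_sample_Vweighted P_ge0 P_sum1 Kmu_le1 mu_gt0 g_gt0
  g_le1 m_large id (fun i => agree ev q (xs i)) a1_ge0 a2_ge0.
exists (emp R s); split; first by exists s.
move=> lam lam_gt0; rewrite !Vpop_Vweighted // !Vhat_Vweighted [X in _ <= X]mulrDr.
apply: lerD; first by apply: le_trans (ler_norm _) _; rewrite distrC.
rewrite mulrCA; apply: ler_wpM2l; first by rewrite addr_ge0 // ltW.
exact: le_trans (ler_norm _) close2.
Qed.

Theorem lemma8 (R : realType) (d : measure_display) (X : measurableType d)
    (A Pi : finType) (ev : Pi -> X -> A) (D : probability X R)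
    (delta : R) (t : nat) (xs : 'I_t.-1 -> X) (gamma : R) :
  injective ev ->
  (forall (p : Pi) (a : A), measurable [set x | ev p x = a]) ->
  0 < delta < 1 ->
  (0 < t)%N ->
  0 < gamma <= 1 ->
  let K := #|A| in
  let N := #|Pi| in
  let mu := mut K N t delta in
  let m := absz (Num.ceil (6 / (gamma ^+ 2 * mu))) in
  (forall (x : X) (P : {ffun Pi -> R}) (q : Pi), is_distr P ->
     Esample P m (fun Q =>
       `| wt K mu (WP ev Q x (ev q x)) - wt K mu (WP ev P x (ev q x)) |)
     <= gamma * wt K mu (WP ev P x (ev q x)))
  /\
  (forall (P : {ffun Pi -> R}) (q : Pi), is_distr P ->
     exists Q : {ffun Pi -> R}, in_Sm m Q /\
       forall lambda : R, 0 < lambda ->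
         (Vpop D ev K N t delta P q - Vpop D ev K N t delta Q q)
         + (1 + lambda) * (Vhat ev K N delta xs Q q - Vhat ev K N delta xs P q)
         <= gamma * (Vpop D ev K N t delta P q
                     + (1 + lambda) * Vhat ev K N delta xs P q)).
Proof.
move=> _ ev_meas delta01 t_gt0 /andP[g_gt0 g_le1] K N mu m.
have [x0] := probability_inhabited D.
have mu_bounds (q : Pi) : 0 < mu /\ K%:R * mu <= 1.
  have K_gt0 : (0 < K)%N by apply/card_gt0P; exists (ev q x0).
  have N_gt0 : (0 < N)%N by apply/card_gt0P; exists q.
  by split; [exact: mut_gt0 | exact: Kmut_le1].
split=> [x P q P_distr | P q P_distr]; have [mu_gt0 Kmu_le1] := mu_bounds q.
  exact: Esample_WP_dev (ceil_sample_size g_gt0 mu_gt0).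
exact: exists_sample_Vpop_Vhat (ceil_sample_size g_gt0 mu_gt0).
Qed.
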